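(* Let $U$ be a commutative supertropical semiring, $M:=eU$, and $\gamma:M\to N$ a surjective homomorphism onto a bipotent semiring $N$. Let $H=H(U,\gamma)$ be the relation on $U$ given by: $x_1\sim_H x_2$ iff $\gamma(ex_1)=\gamma(ex_2)$ and either $x_1=x_2$, or $x_1,x_2\in M\cup\Sigma_0(U,\gamma)$, or $\gamma(ex_1)=0$. Then $\pi_H:U\to U/H$ is the initial semiring homomorphism covering $\gamma$: $U/H$ (with the supertropical monoid structure making $\pi_H$ a transmission, its ghost ideal identified with $N$) is a supertropical semiring, $\pi_H$ is a semiring homomorphism covering $\gamma$, and for every supertropical semiring $W$ with $eW=N$ and every semiring homomorphism $\beta:U\to W$ covering $\gamma$ there is a unique semiring homomorphism $\eta:U/H\to W$ covering $\mathrm{id}_N$ with $\beta=\eta\circ\pi_H$.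
   Context: A supertropical monoid is a commutative monoid $(U,\cdot)$ with absorbing element $0$ and distinguished idempotent $e$ with $ex=0\Rightarrow x=0$, together with a total ordering on $M:=eU$, compatible with multiplication and with $0$ least, making $M$ a bipotent semiring (addition $=\max$). A supertropical semiring is a supertropical monoid for which the addition $x+y:=y$ if $ex<ey$, $x$ if $ex>ey$, $ex$ if $ex=ey$ is associative and distributive. $\mathcal T(U):=U\setminus eU$. A map $\alpha:U\to V$ covers $\gamma$ if it maps $eU$ to $eV$ and restricts there to $\gamma$. $\Sigma_0(U,\gamma):=\{x\in\mathcal T(U):\exists x_1\in M,\ x_1<ex,\ \gamma(x_1)=\gamma(ex)\neq0\}$. For a TE-relation $E$ (multiplicative equivalence relation, order compatible on $M$, with $ex\sim_E0\Rightarrow x\sim_E0$), $U/E$ carries the unique supertropical monoid structure making $\pi_E$ a transmission (a multiplicative map preserving $0,1,e$ and the order on ghosts). *)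

From HB Require Import structures.
From mathcomp Require Import all_boot all_algebra.
From Stdlib Require Import ClassicalEpsilon.
Set Implicit Arguments. Unset Strict Implicit. Unset Printing Implicit Defensive.
Import GRing.Theory.
Local Open Scope ring_scope.

(* Raw data of a (would-be) supertropical monoid: carrier, multiplication,
   1, absorbing 0, distinguished idempotent e, and an order relation which is
   only required to be a total order on the ghost ideal M = eU. *)
Record STops := STOps {
  st_car :> Type;
  st_mul : st_car -> st_car -> st_car;
  st_one : st_car;
  st_zero : st_car;
  st_e : st_car;
  st_le : st_car -> st_car -> Prop }.

Section SupertropicalDefs.
Variable S : STops.

(* x lies in M = eU  (equivalently e x = x, since e is idempotent) *)
Definition ghost (x : S) : Prop := st_mul (st_e S) x = x.

Definition st_lt (x y : S) : Prop := st_le x y /\ x <> y.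

Definition st_add (x y : S) : S :=
  let ex := st_mul (st_e S) x in
  let ey := st_mul (st_e S) y in
  if excluded_middle_informative (st_lt ex ey) then y
  else if excluded_middle_informative (st_lt ey ex) then x
  else ex.

Record is_st_monoid : Prop := {
  stm_mulA : forall x y z : S, st_mul x (st_mul y z) = st_mul (st_mul x y) z;
  stm_mulC : forall x y : S, st_mul x y = st_mul y x;
  stm_mul1 : forall x : S, st_mul (st_one S) x = x;
  stm_mul0 : forall x : S, st_mul (st_zero S) x = st_zero S;
  stm_ee : st_mul (st_e S) (st_e S) = st_e S;
  stm_e0 : forall x : S, st_mul (st_e S) x = st_zero S -> x = st_zero S;
  stm_le_refl : forall x : S, ghost x -> st_le x x;
  stm_le_anti : forall x y : S, ghost x -> ghost y -> st_le x y -> st_le y x -> x = y;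
  stm_le_trans : forall x y z : S, ghost x -> ghost y -> ghost z ->
      st_le x y -> st_le y z -> st_le x z;
  stm_le_total : forall x y : S, ghost x -> ghost y -> st_le x y \/ st_le y x;
  stm_le_mul : forall x y z : S, ghost x -> ghost y -> ghost z ->
      st_le x y -> st_le (st_mul x z) (st_mul y z);
  stm_le0 : forall x : S, ghost x -> st_le (st_zero S) x }.

Definition is_st_semiring : Prop :=
  [/\ is_st_monoid,
      (forall x y z : S, st_add x (st_add y z) = st_add (st_add x y) z) &
      (forall x y z : S, st_mul x (st_add y z) = st_add (st_mul x y) (st_mul x z))].

End SupertropicalDefs.

Definition st_semiring_hom (S T : STops) (f : S -> T) : Prop :=
  [/\ f (st_zero S) = st_zero T, f (st_one S) = st_one T,
      (forall x y, f (st_mul x y) = st_mul (f x) (f y)) &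
      (forall x y, f (st_add x y) = st_add (f x) (f y))].

Definition bipotent (N : comPzSemiRingType) : Prop :=
  forall a b : N, a + b = a \/ a + b = b.

(* gam : M -> N (given as a function on U, only used on M = eU) is a semiring
   homomorphism of M = eU (unit e, addition = max) into N *)
Definition ghost_hom (U : STops) (N : comPzSemiRingType) (gam : U -> N) : Prop :=
  [/\ gam (st_zero U) = 0, gam (st_e U) = 1 &
      forall x y : U, ghost x -> ghost y ->
        gam (st_mul x y) = gam x * gam y /\ gam (st_add x y) = gam x + gam y].

Definition ghost_surj (U : STops) (N : comPzSemiRingType) (gam : U -> N) : Prop :=
  forall n : N, exists x : U, ghost x /\ gam x = n.

Definition ghost_ident (N : comPzSemiRingType) (S : STops) (i : N -> S) : Prop :=
  [/\ (forall n, ghost (i n)),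
      (forall y : S, ghost y -> exists n, i n = y),
      injective i,
      i 0 = st_zero S /\ i 1 = st_e S &
      forall a b, i (a * b) = st_mul (i a) (i b) /\ i (a + b) = st_add (i a) (i b)].

Definition covers (U S : STops) (N : comPzSemiRingType) (gam : U -> N)
  (i : N -> S) (f : U -> S) : Prop :=
  forall x : U, ghost x -> f x = i (gam x).

Section HRelation.
Variables (U : STops) (N : comPzSemiRingType) (gam : U -> N).
Local Notation eU x := (st_mul (st_e U) x).

Definition Sigma0 (x : U) : Prop :=
  ~ ghost x /\
  exists x1 : U, [/\ ghost x1, st_lt x1 (eU x), gam x1 = gam (eU x) & gam (eU x) <> 0].

Definition Hrel (x1 x2 : U) : Prop :=
  gam (eU x1) = gam (eU x2) /\
  (x1 = x2 \/ ((ghost x1 \/ Sigma0 x1) /\ (ghost x2 \/ Sigma0 x2)) \/ gam (eU x1) = 0).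

Definition Hq : Type := {P : U -> Prop | exists x, P = Hrel x}.

Definition piH (x : U) : Hq := exist _ (Hrel x) (ex_intro _ x erefl).

Definition repH (q : Hq) : U :=
  proj1_sig (constructive_indefinite_description _ (proj2_sig q)).

(* the (unique) supertropical monoid structure on U/H making pi_H a
   transmission: [x][y] = [xy], 1 = [1], 0 = [0], e = [e], and the order on
   ghost classes is the order of N via gam. *)
Definition quotH : STops :=
  @STOps Hq (fun a b => piH (st_mul (repH a) (repH b)))
    (piH (st_one U)) (piH (st_zero U)) (piH (st_e U))
    (fun a b => gam (eU (repH a)) + gam (eU (repH b)) = gam (eU (repH b))).

Definition iotaH (n : N) : quotH :=
  piH (epsilon (inhabits (st_zero U)) (fun x => ghost x /\ gam x = n)).

End HRelation.

(* H is compatible with multiplication because Sigma0 is multiplicatively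
   closed up to M and the kernel of gamma: a witness x1 < ex of x in Sigma0
   gives x1 z <= e(xz) with the same gamma-value, which is either a witness
   for xz or equal to e(xz), and then xz is ghost.  Ghost classes of U/H are ordered as
   N, and the supertropical sum of representatives respects H: if
   gamma(ex) = gamma(ey) but ex < ey, then y lies in M or Sigma0, hence y ~ ex.  Conversely a homomorphism beta covering gamma sends each x in M,
   in Sigma0, or with gamma(ex) = 0 to gamma(ex) (for x in Sigma0 with witness
   x1, beta x = beta (x + x1) = beta x + e beta x = e beta x), so beta is
   constant on H-classes and factors uniquely through pi_H. *)

From mathcomp Require Import all_boot all_algebra.
From Stdlib Require Import ClassicalEpsilon ProofIrrelevance FunctionalExtensionality PropExtensionality.
Set Implicit Arguments. Unset Strict Implicit. Unset Printing Implicit Defensive.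
Import GRing.Theory.
Local Open Scope ring_scope.

Section SupertropicalAddition.
Variable S : STops.
Local Notation eS x := (st_mul (st_e S) x).

Lemma st_add_ltr (x y : S) : st_lt (eS x) (eS y) -> st_add x y = y.
Proof. by move=> lt; rewrite /st_add /=; destruct excluded_middle_informative. Qed.

Lemma st_add_nlt (x y : S) :
  ~ st_lt (eS x) (eS y) -> ~ st_lt (eS y) (eS x) -> st_add x y = eS x.
Proof.
move=> nxy nyx; rewrite /st_add /=.
by do 2 destruct excluded_middle_informative.
Qed.

Lemma st_add_eq (x y : S) : eS x = eS y -> st_add x y = eS x.
Proof. by move=> exy; apply: st_add_nlt; rewrite exy => -[]. Qed.

Hypothesis HM : is_st_monoid S.

Lemma ghost_e (x : S) : ghost (eS x).
Proof. by rewrite /ghost (stm_mulA HM) (stm_ee HM). Qed.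

Lemma ghost_mulr (x z : S) : ghost x -> ghost (st_mul x z).
Proof. by rewrite /ghost (stm_mulA HM) => ->. Qed.

Lemma ghost_add (x y : S) : ghost x -> ghost y -> ghost (st_add x y).
Proof.
move=> gx gy; rewrite /st_add /=.
by do 2 destruct excluded_middle_informative => //; apply: ghost_e.
Qed.

Lemma st_e_mul (x z : S) : eS (st_mul x z) = st_mul (eS x) (eS z).
Proof.
rewrite -[RHS](stm_mulA HM).
have ->: st_mul x (eS z) = eS (st_mul x z).
  by rewrite (stm_mulA HM) [st_mul x _](stm_mulC HM) -(stm_mulA HM).
by rewrite [RHS](stm_mulA HM) (stm_ee HM).
Qed.

Lemma st_e0 : eS (st_zero S) = st_zero S.
Proof. by rewrite (stm_mulC HM) (stm_mul0 HM). Qed.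

Lemma st_add_ltl (x y : S) : st_lt (eS y) (eS x) -> st_add x y = x.
Proof.
move=> [le_yx ne_yx]; rewrite /st_add /=.
destruct excluded_middle_informative as [[le_xy ne_xy]|nlt_xy].
  by case: ne_yx; apply: (stm_le_anti HM) => //; apply: ghost_e.
by destruct excluded_middle_informative as [|nlt_yx] => //; case: nlt_yx.
Qed.

Lemma st_add_e (x : S) : st_add x (eS x) = eS x.
Proof. by rewrite st_add_eq // ghost_e. Qed.

End SupertropicalAddition.

Section GhostHomomorphism.
Variables (U : STops) (N : comPzSemiRingType) (gam : U -> N).
Hypotheses (HM : is_st_monoid U) (Hg : ghost_hom gam).
Local Notation eU x := (st_mul (st_e U) x).

Lemma gam_e_mul (x z : U) : gam (eU (st_mul x z)) = gam (eU x) * gam (eU z).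
Proof.
have [_ _ /(_ _ _ (ghost_e HM x) (ghost_e HM z)) [gM _]] := Hg.
by rewrite (st_e_mul HM).
Qed.

Lemma gam_le (u v : U) : ghost u -> ghost v -> st_le u v -> gam u + gam v = gam v.
Proof.
move=> gu gv le_uv; have [_ _ /(_ u v gu gv) [_ <-]] := Hg; congr gam.
have [->|ne_uv] := classic (u = v); first by rewrite st_add_eq // gv.
by apply: st_add_ltr; rewrite gu gv.
Qed.

Lemma lt_of_gam_lt (u v : U) : ghost u -> ghost v ->
  gam u + gam v = gam v -> gam u <> gam v -> st_lt u v.
Proof.
move=> gu gv le_gam ne_gam; split; last by move=> euv; apply: ne_gam; rewrite euv.
case: (stm_le_total HM gu gv) => // le_vu.
by case: ne_gam; rewrite -le_gam addrC (gam_le gv gu le_vu).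
Qed.

End GhostHomomorphism.

Section HEquivalence.
Variables (U : STops) (N : comPzSemiRingType) (gam : U -> N).
Local Notation eU x := (st_mul (st_e U) x).
Local Notation pi := (piH gam).

Definition MSigma0 (x : U) : Prop := ghost x \/ Sigma0 gam x.

Lemma Hrel_refl (x : U) : Hrel gam x x.
Proof. by split => //; left. Qed.

Lemma Hrel_sym (x y : U) : Hrel gam x y -> Hrel gam y x.
Proof.
move=> [exy [->|[[Mx My]|x0]]]; split => //; first by left.
  by right; left.
by right; right; rewrite -exy.
Qed.

Lemma Hrel_trans (x y z : U) : Hrel gam x y -> Hrel gam y z -> Hrel gam x z.
Proof.
move=> [exy Dxy] [eyz Dyz]; split; first by rewrite exy.
case: Dxy => [->|[[Mx My]|x0]] //; last by right; right.
case: Dyz => [<-|[[_ Mz]|y0]]; [by right; left | by right; left |].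
by right; right; rewrite exy.
Qed.

Lemma Hrel_ghost (x y : U) : ghost x -> ghost y -> gam x = gam y -> Hrel gam x y.
Proof. by move=> gx gy exy; rewrite /Hrel gx gy; split => //; right; left; split; left. Qed.

Lemma Hrel_lt_ghost (u y : U) :
  ghost u -> st_lt u (eU y) -> gam u = gam (eU y) -> Hrel gam y u.
Proof.
move=> gu lt_uy euy; split; first by rewrite gu euy.
have [y0|ny0] := classic (gam (eU y) = 0); first by right; right.
right; left; split; last by left.
have [gy|ngy] := classic (ghost y); first by left.
by right; split => //; exists u.
Qed.

Lemma piH_eq (x y : U) : pi x = pi y <-> Hrel gam x y.
Proof.
split=> [/(congr1 (@proj1_sig _ _)) /= Exy | Hxy].
  by move: (Hrel_refl y); rewrite -Exy.
apply: subset_eq_compat; apply: functional_extensionality => z.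
apply: propositional_extensionality.
by split; [apply: Hrel_trans; apply: Hrel_sym | apply: Hrel_trans].
Qed.

Lemma repHK (q : Hq gam) : pi (repH q) = q.
Proof.
case: q => P p; rewrite /piH /repH /=; apply: subset_eq_compat.
by rewrite -(proj2_sig (constructive_indefinite_description _ p)).
Qed.

Lemma quotH_ind (P : quotH gam -> Prop) : (forall x, P (pi x)) -> forall q, P q.
Proof. by move=> Ppi q; rewrite -(repHK q). Qed.

Lemma Hrel_repH (x : U) : Hrel gam (repH (pi x)) x.
Proof. by apply/piH_eq; rewrite repHK. Qed.

Lemma gam_e_repH (x : U) : gam (eU (repH (pi x))) = gam (eU x).
Proof. by case: (Hrel_repH x). Qed.

Lemma le_quotH (x y : U) :
  st_le (pi x : quotH gam) (pi y) = (gam (eU x) + gam (eU y) = gam (eU y)).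
Proof. by rewrite /= !gam_e_repH. Qed.

End HEquivalence.

Section Quotient.
Variables (U : STops) (N : comPzSemiRingType) (gam : U -> N).
Hypotheses (HM : is_st_monoid U) (Hg : ghost_hom gam) (HN : bipotent N).
Hypothesis HA : forall x y z : U, st_add x (st_add y z) = st_add (st_add x y) z.
Hypothesis HD : forall x y z : U, st_mul x (st_add y z) = st_add (st_mul x y) (st_mul x z).
Hypothesis Hs : ghost_surj gam.
Local Notation eU x := (st_mul (st_e U) x).
Local Notation pi := (piH gam).

Lemma MSigma0_mulr (x z : U) :
  MSigma0 gam x -> MSigma0 gam (st_mul x z) \/ gam (eU (st_mul x z)) = 0.
Proof.
case=> [gx|[_ [x1 [gx1 lt_x1 gam_x1 _]]]]; first by left; left; apply: ghost_mulr.
set w := st_mul x1 z.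
have gw : ghost w by apply: ghost_mulr.
have w_e : w = st_mul x1 (eU z).
  by rewrite (stm_mulA HM) [st_mul x1 _](stm_mulC HM) gx1.
have le_w : st_le w (eU (st_mul x z)).
  rewrite w_e (st_e_mul HM); case: lt_x1 => le_x1 _.
  by apply: (stm_le_mul HM) => //; apply: ghost_e.
have gam_w : gam w = gam (eU (st_mul x z)).
  have [_ _ /(_ _ _ gx1 (ghost_e HM z)) [gM _]] := Hg.
  by rewrite (gam_e_mul HM Hg) w_e gM gam_x1.
have [ew|new] := classic (w = eU (st_mul x z)).
  (* x = x + x1 as x1 < ex, so xz = xz + x1 z = xz + e(xz) is ghost *)
  left; left.
  have x_x1 : st_add x x1 = x by apply: (st_add_ltl HM); rewrite gx1.
  have := HD z x x1; rewrite x_x1 [st_mul z x](stm_mulC HM) [st_mul z x1](stm_mulC HM) -/w.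
  by rewrite st_add_eq; [move=> ->; apply: ghost_e | rewrite -ew gw].
have [gxz|ngxz] := classic (ghost (st_mul x z)); first by left; left.
have [xz0|nxz0] := classic (gam (eU (st_mul x z)) = 0); first by right.
by left; right; split => //; exists w; split => //; split.
Qed.

Lemma Hrel_mulr (x y z : U) : Hrel gam x y -> Hrel gam (st_mul x z) (st_mul y z).
Proof.
move=> [exy Dxy].
have exyz : gam (eU (st_mul x z)) = gam (eU (st_mul y z)).
  by rewrite !(gam_e_mul HM Hg) exy.
split => //; case: Dxy => [->|[[Mx My]|x0]]; first by left.
  case: (MSigma0_mulr z Mx) => [Mxz|xz0]; last by right; right.
  case: (MSigma0_mulr z My) => [Myz|yz0]; first by right; left.
  by right; right; rewrite exyz.
by right; right; rewrite (gam_e_mul HM Hg) x0 mul0r.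
Qed.

Lemma piH_mul (x y : U) : st_mul (pi x : quotH gam) (pi y) = pi (st_mul x y).
Proof.
rewrite /=; apply/piH_eq; apply: Hrel_trans (Hrel_mulr _ (Hrel_repH gam x)) _.
rewrite (stm_mulC HM) [st_mul x y](stm_mulC HM).
exact: Hrel_mulr (Hrel_repH gam y).
Qed.

Lemma piH_ghost (x y : U) : ghost x -> ghost y -> gam x = gam y -> pi x = pi y.
Proof. by move=> gx gy exy; apply/piH_eq; apply: Hrel_ghost. Qed.

Lemma piH_e_eq (x y : U) : pi (eU x) = pi (eU y) <-> gam (eU x) = gam (eU y).
Proof.
split=> [/piH_eq [] | exy]; first by rewrite !ghost_e.
by apply: piH_ghost => //; apply: ghost_e.
Qed.

Lemma quotH_monoid : is_st_monoid (quotH gam).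
Proof.
have [gam0 gam1 _] := Hg.
have e0 := st_e0 HM.
split.
- move=> a b c; elim/quotH_ind: a => a; elim/quotH_ind: b => b; elim/quotH_ind: c => c.
  by rewrite !piH_mul (stm_mulA HM).
- move=> a b; elim/quotH_ind: a => a; elim/quotH_ind: b => b.
  by rewrite !piH_mul (stm_mulC HM).
- by elim/quotH_ind => a; rewrite piH_mul (stm_mul1 HM).
- by elim/quotH_ind => a; rewrite piH_mul (stm_mul0 HM).
- by rewrite piH_mul (stm_ee HM).
- elim/quotH_ind => a; rewrite piH_mul => /piH_eq [ea0 _].
  move: ea0; rewrite (stm_mulA HM) (stm_ee HM) e0 gam0 => ea0.
  by apply/piH_eq; split; [rewrite e0 gam0 | right; right].
- by elim/quotH_ind => a _; rewrite le_quotH; case: (HN (gam (eU a)) (gam (eU a))).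
- move=> a b; elim/quotH_ind: a => a; elim/quotH_ind: b => b.
  rewrite /ghost !piH_mul !le_quotH => <- <- le_ab le_ba.
  by apply/piH_e_eq; rewrite -le_ab addrC le_ba.
- move=> a b c; elim/quotH_ind: a => a; elim/quotH_ind: b => b; elim/quotH_ind: c => c.
  by move=> _ _ _; rewrite !le_quotH => le_ab le_bc; rewrite -le_bc addrA le_ab.
- move=> a b; elim/quotH_ind: a => a; elim/quotH_ind: b => b _ _; rewrite !le_quotH.
  by case: (HN (gam (eU a)) (gam (eU b))) => le_ab; [right; rewrite addrC | left].
- move=> a b c; elim/quotH_ind: a => a; elim/quotH_ind: b => b; elim/quotH_ind: c => c.
  by move=> _ _ _; rewrite !piH_mul !le_quotH !(gam_e_mul HM Hg) -mulrDl => ->.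
- by elim/quotH_ind => a _; rewrite le_quotH e0 gam0 add0r.
Qed.

Lemma lt_quotH (x y : U) : st_lt (pi (eU x) : quotH gam) (pi (eU y)) <->
  gam (eU x) + gam (eU y) = gam (eU y) /\ gam (eU x) <> gam (eU y).
Proof.
rewrite /st_lt le_quotH !ghost_e //.
by split=> -[le_xy ne_xy]; split=> // exy; apply: ne_xy; apply/piH_e_eq.
Qed.

Lemma Hrel_add_gam_eq (x y : U) :
  gam (eU x) = gam (eU y) -> Hrel gam (st_add x y) (eU x).
Proof.
move=> exy.
have [lt_xy|nlt_xy] := classic (st_lt (eU x) (eU y)).
  by rewrite st_add_ltr //; apply: Hrel_lt_ghost => //; apply: ghost_e.
have [lt_yx|nlt_yx] := classic (st_lt (eU y) (eU x)).
  rewrite (st_add_ltl HM) //.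
  apply: Hrel_trans (Hrel_lt_ghost (ghost_e HM y) lt_yx (esym exy)) _.
  exact: Hrel_ghost (ghost_e HM y) (ghost_e HM x) (esym exy).
by rewrite st_add_nlt //; apply: Hrel_refl.
Qed.

Lemma piH_add (x y : U) : st_add (pi x : quotH gam) (pi y) = pi (st_add x y).
Proof.
have e_pi z : st_mul (st_e (quotH gam)) (pi z) = pi (eU z) := piH_mul (st_e U) z.
have [exy|nexy] := classic (gam (eU x) = gam (eU y)).
  rewrite st_add_eq; last by rewrite !e_pi; apply/piH_e_eq.
  by rewrite e_pi; symmetry; apply/piH_eq; apply: Hrel_add_gam_eq.
case: (HN (gam (eU x)) (gam (eU y))) => le_gam.
  have le_yx : gam (eU y) + gam (eU x) = gam (eU x) by rewrite addrC.
  have neyx : gam (eU y) <> gam (eU x) by move=> eyx; apply: nexy.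
  rewrite (st_add_ltl quotH_monoid); last by rewrite !e_pi; apply/lt_quotH.
  by rewrite (st_add_ltl HM) //; apply: (lt_of_gam_lt HM Hg) => //; apply: ghost_e.
rewrite st_add_ltr; last by rewrite !e_pi; apply/lt_quotH.
by rewrite st_add_ltr //; apply: (lt_of_gam_lt HM Hg) => //; apply: ghost_e.
Qed.

Lemma quotH_semiring : is_st_semiring (quotH gam).
Proof.
split; first exact: quotH_monoid.
- move=> a b c; elim/quotH_ind: a => a; elim/quotH_ind: b => b; elim/quotH_ind: c => c.
  by rewrite !piH_add HA.
- move=> a b c; elim/quotH_ind: a => a; elim/quotH_ind: b => b; elim/quotH_ind: c => c.
  by rewrite !(piH_add, piH_mul) HD.
Qed.

Lemma piH_hom : st_semiring_hom (pi : U -> quotH gam).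
Proof. by split=> // x y; rewrite (piH_mul, piH_add). Qed.

Lemma iotaH_piH (n : N) : exists x, [/\ ghost x, gam x = n & iotaH gam n = pi x].
Proof.
rewrite /iotaH; set x := epsilon _ _.
have [gx gam_x] : ghost x /\ gam x = n := epsilon_spec _ _ (Hs n).
by exists x.
Qed.

Lemma piH_covers : covers gam (iotaH gam) pi.
Proof.
move=> x gx; have [y [gy gam_y ->]] := iotaH_piH (gam x).
exact: piH_ghost.
Qed.

Lemma iotaH_ghost_ident : ghost_ident (iotaH gam).
Proof.
have [gam0 gam1 gamM] := Hg.
have ghost_pi x : ghost x -> ghost (pi x : quotH gam).
  by move=> gx; rewrite /ghost piH_mul gx.
split.
- by move=> n; have [x [gx _ ->]] := iotaH_piH n; apply: ghost_pi.
- elim/quotH_ind => y; rewrite /ghost piH_mul => <-.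
  by exists (gam (eU y)); symmetry; apply: piH_covers; apply: ghost_e.
- move=> a b; have [x [gx <- ->]] := iotaH_piH a; have [y [gy <- ->]] := iotaH_piH b.
  by move/piH_eq => []; rewrite gx gy.
- split; [rewrite -gam0 | rewrite -gam1]; symmetry; apply: piH_covers.
    by rewrite /ghost (st_e0 HM).
  by rewrite /ghost (stm_ee HM).
- move=> a b; have [x [gx <- ->]] := iotaH_piH a; have [y [gy <- ->]] := iotaH_piH b.
  have [gamxy gam_add] := gamM x y gx gy.
  rewrite piH_mul piH_add -gamxy -gam_add.
  by split; symmetry; apply: piH_covers; [apply: ghost_mulr | apply: ghost_add].
Qed.

Section Factorization.
Variables (W : STops) (iW : N -> W) (beta : U -> W).
Hypotheses (HMW : is_st_monoid W) (HiW : ghost_ident iW).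
Hypotheses (Hb : st_semiring_hom beta) (Hc : covers gam iW beta).

Lemma beta_e (x : U) : beta (eU x) = st_mul (st_e W) (beta x).
Proof.
have [_ _ betaM _] := Hb; have [_ _ _ [_ iW1] _] := HiW; have [_ gam1 _] := Hg.
by rewrite betaM Hc ?gam1 ?iW1 // /ghost (stm_ee HM).
Qed.

Lemma beta_MSigma0 (x : U) : MSigma0 gam x -> beta x = iW (gam (eU x)).
Proof.
have [_ _ _ betaD] := Hb.
rewrite -Hc; last exact: ghost_e.
case=> [gx|[_ [x1 [gx1 lt_x1 gam_x1 _]]]]; first by rewrite gx.
have x_x1 : st_add x x1 = x by apply: (st_add_ltl HM); rewrite gx1.
have beta_x1 : beta x1 = st_mul (st_e W) (beta x).
  by rewrite Hc // gam_x1 -Hc ?beta_e //; apply: ghost_e.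
by rewrite -{1}x_x1 betaD beta_x1 (st_add_e HMW) beta_e.
Qed.

Lemma beta_gam0 (x : U) : gam (eU x) = 0 -> beta x = iW 0.
Proof.
have [_ _ _ [iW0 _] _] := HiW.
move=> x0; rewrite iW0; apply: (stm_e0 HMW).
by rewrite -beta_e Hc ?x0 //; apply: ghost_e.
Qed.

Lemma beta_Hrel (x y : U) : Hrel gam x y -> beta x = beta y.
Proof.
move=> [exy [->|[[Mx My]|x0]]] //.
  by rewrite !beta_MSigma0 // exy.
by rewrite !beta_gam0 // -exy.
Qed.

Definition factorH (q : quotH gam) : W := beta (repH q).

Lemma factorH_piH (x : U) : factorH (pi x) = beta x.
Proof. by apply: beta_Hrel; apply: Hrel_repH. Qed.

Lemma factorH_hom : st_semiring_hom factorH.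
Proof.
have [beta0 beta1 betaM betaD] := Hb.
split; first by rewrite -beta0 -factorH_piH.
- by rewrite -beta1 -factorH_piH.
- move=> a b; elim/quotH_ind: a => a; elim/quotH_ind: b => b.
  by rewrite piH_mul !factorH_piH.
- move=> a b; elim/quotH_ind: a => a; elim/quotH_ind: b => b.
  by rewrite piH_add !factorH_piH.
Qed.

Lemma factorH_iotaH (n : N) : factorH (iotaH gam n) = iW n.
Proof. by have [x [gx <- ->]] := iotaH_piH n; rewrite factorH_piH Hc. Qed.

End Factorization.

End Quotient.

Theorem theorem5p13 (U : STops) (N : comPzSemiRingType) (gam : U -> N) :
  is_st_semiring U -> bipotent N -> ghost_hom gam -> ghost_surj gam ->
  [/\ is_st_semiring (quotH gam),
      ghost_ident (iotaH gam),
      st_semiring_hom (piH gam : U -> quotH gam),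
      covers gam (iotaH gam) (piH gam) &
      forall (W : STops) (iW : N -> W), is_st_semiring W -> ghost_ident iW ->
      forall beta : U -> W, st_semiring_hom beta -> covers gam iW beta ->
        (exists eta : quotH gam -> W,
            [/\ st_semiring_hom eta,
                (forall n : N, eta (iotaH gam n) = iW n) &
                (forall x : U, beta x = eta (piH gam x))]) /\
        (forall eta1 eta2 : quotH gam -> W,
            st_semiring_hom eta1 -> (forall n, eta1 (iotaH gam n) = iW n) ->
            (forall x, beta x = eta1 (piH gam x)) ->
            st_semiring_hom eta2 -> (forall n, eta2 (iotaH gam n) = iW n) ->
            (forall x, beta x = eta2 (piH gam x)) ->
            forall q, eta1 q = eta2 q)].
Proof.
move=> [HM HA HD] HN Hg Hs; split.
- exact: quotH_semiring.
- exact: iotaH_ghost_ident.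
- exact: piH_hom.
- exact: piH_covers.
move=> W iW [HMW _ _] HiW beta Hb Hc; split.
  exists (factorH beta); split.
  - exact: factorH_hom Hb Hc.
  - exact: factorH_iotaH Hb Hc.
  - by move=> x; rewrite (factorH_piH HM Hg HMW HiW Hb Hc).
move=> eta1 eta2 _ _ beta_eta1 _ _ beta_eta2; elim/quotH_ind => x.
by rewrite -beta_eta1 -beta_eta2.
Qed.
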